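(* Let $(a_1,\dots,a_6)$ be a minimal tetrahedral curve, with ideal $I$, such that $$a_1>\max\{a_3+a_5+2,\ a_2+a_4+2\}\quad\text{and}\quad a_6>\max\{a_4+a_5+2,\ a_2+a_3+2\}.$$ Then there is no non-minimal tetrahedral curve that reduces to $I$ by a finite sequence of reductions of types (A), (B), (C), (D).
   Context: Let $k$ be a field, $R=k[a,b,c,d]$. The tetrahedral curve $(a_1,\dots,a_6)$ has ideal $(a,b)^{a_1}\cap(a,c)^{a_2}\cap(a,d)^{a_3}\cap(b,c)^{a_4}\cap(b,d)^{a_5}\cap(c,d)^{a_6}$. With $a_i'=\max\{0,a_i-1\}$, the reductions are: (A) if $a_1+a_2\ge a_4$, $a_1+a_3\ge a_5$, $a_2+a_3\ge a_6$, the curve reduces to $(a_1',a_2',a_3',a_4,a_5,a_6)$ (and its ideal is $a\cdot I'+(b^{a_1}c^{a_2}d^{a_3})$, $I'$ the new ideal); (B) if $a_1+a_4\ge a_2$, $a_1+a_5\ge a_3$, $a_4+a_5\ge a_6$, to $(a_1',a_2,a_3,a_4',a_5',a_6)$; (C) if $a_2+a_4\ge a_1$, $a_2+a_6\ge a_3$, $a_4+a_6\ge a_5$, to $(a_1,a_2',a_3,a_4',a_5,a_6')$; (D) if $a_3+a_5\ge a_1$, $a_3+a_6\ge a_2$, $a_5+a_6\ge a_4$, to $(a_1,a_2,a_3',a_4,a_5',a_6')$. A non-arithmetically Cohen–Macaulay tetrahedral curve is minimal if none of (A)–(D) applies. These reductions are basic double links and preserve the even liaison class. *)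

From HB Require Import structures.
From mathcomp Require Import all_boot all_order all_algebra.
From mathcomp Require Import mpoly.
From Stdlib Require Import Relation_Operators.

Set Implicit Arguments.
Unset Strict Implicit.
Unset Printing Implicit Defensive.

Import GRing.Theory.
Local Open Scope ring_scope.

Record tcurve := TC { a1 : nat; a2 : nat; a3 : nat; a4 : nat; a5 : nat; a6 : nat }.

Section Ring.
Variable k : fieldType.

Definition R := {mpoly k[4]}.
Definition va : R := 'X_(0 : 'I_4).
Definition vb : R := 'X_(1 : 'I_4).
Definition vc : R := 'X_(2 : 'I_4).
Definition vd : R := 'X_(3 : 'I_4).

Definition ideal := R -> Prop.

(* (x,y)^n : generated by the monomials x^e y^(n-e), 0 <= e <= n. *)
Definition pow_ideal2 (x y : R) (n : nat) : ideal :=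
  fun p => exists q : 'I_n.+1 -> R,
    p = \sum_(e < n.+1) x ^+ e * y ^+ (n - e) * q e.

Definition tet_ideal (C : tcurve) : ideal := fun p =>
  [/\ pow_ideal2 va vb (a1 C) p, pow_ideal2 va vc (a2 C) p,
      pow_ideal2 va vd (a3 C) p & [/\ pow_ideal2 vb vc (a4 C) p,
      pow_ideal2 vb vd (a5 C) p & pow_ideal2 vc vd (a6 C) p]].

Definition add_principal (J : ideal) (f : R) : ideal :=
  fun p => exists h : R, J (p - f * h).

Definition nzd_on (J : ideal) (f : R) : Prop := forall g : R, J (f * g) -> J g.

(* the homogeneous maximal ideal m = (a,b,c,d): zero constant term *)
Definition in_irrelevant (f : R) : Prop := mcoeff 0 f = 0.

(* R/I is Cohen-Macaulay (I the ideal of a curve, so dim R/I = 2 unless I = R):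
   I = R (empty curve), or depth R/I >= 2, i.e. there is an R/I-regular
   sequence f, g of length 2 in m. *)
Definition ACM (I : ideal) : Prop :=
  (forall p, I p) \/
  exists f g : R, [/\ in_irrelevant f, in_irrelevant g,
                      nzd_on I f & nzd_on (add_principal I f) g].

End Ring.

Definition pd (n : nat) := (n - 1)%N.   (* a' = max{0, a-1} *)

Definition condA C := [/\ (a1 C + a2 C >= a4 C)%N, (a1 C + a3 C >= a5 C)%N & (a2 C + a3 C >= a6 C)%N].
Definition redA C := TC (pd (a1 C)) (pd (a2 C)) (pd (a3 C)) (a4 C) (a5 C) (a6 C).
Definition condB C := [/\ (a1 C + a4 C >= a2 C)%N, (a1 C + a5 C >= a3 C)%N & (a4 C + a5 C >= a6 C)%N].
Definition redB C := TC (pd (a1 C)) (a2 C) (a3 C) (pd (a4 C)) (pd (a5 C)) (a6 C).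
Definition condC C := [/\ (a2 C + a4 C >= a1 C)%N, (a2 C + a6 C >= a3 C)%N & (a4 C + a6 C >= a5 C)%N].
Definition redC C := TC (a1 C) (pd (a2 C)) (a3 C) (pd (a4 C)) (a5 C) (pd (a6 C)).
Definition condD C := [/\ (a3 C + a5 C >= a1 C)%N, (a3 C + a6 C >= a2 C)%N & (a5 C + a6 C >= a4 C)%N].
Definition redD C := TC (a1 C) (a2 C) (pd (a3 C)) (a4 C) (pd (a5 C)) (pd (a6 C)).

Definition red_step (C D : tcurve) : Prop :=
  [\/ condA C /\ D = redA C, condB C /\ D = redB C,
      condC C /\ D = redC C | condD C /\ D = redD C].

Definition some_reduction_applies C := [\/ condA C, condB C, condC C | condD C].

Definition reduces_to (C D : tcurve) : Prop := clos_refl_trans tcurve red_step C D.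

Definition minimal (k : fieldType) (C : tcurve) : Prop :=
  ~ ACM (@tet_ideal k C) /\ ~ some_reduction_applies C.

(* Each reduction leaves a curve violating one of the four hypothesised
   inequalities: after (A) one has a6 <= a2 + a3 + 2, after (B)
   a6 <= a4 + a5 + 2, after (C) a1 <= a2 + a4 + 2 and after (D)
   a1 <= a3 + a5 + 2, because the condition of the reduction bounds the
   unchanged entry by a sum of two entries that dropped by at most one.
   So C is not the result of any reduction, every chain of reductions
   ending at C is empty, and the only curve reducing to C is C itself. *)
From Stdlib Require Import Relation_Operators Operators_Properties.
From mathcomp Require Import all_boot all_order all_algebra.
From mathcomp Require Import zify.

Lemma redA_a6_bound (E : tcurve) :
  condA E -> (a6 (redA E) <= a2 (redA E) + a3 (redA E) + 2)%N.
Proof. by case: E => e1 e2 e3 e4 e5 e6 [/= _ _]; rewrite /pd; lia. Qed.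

Lemma redB_a6_bound (E : tcurve) :
  condB E -> (a6 (redB E) <= a4 (redB E) + a5 (redB E) + 2)%N.
Proof. by case: E => e1 e2 e3 e4 e5 e6 [/= _ _]; rewrite /pd; lia. Qed.

Lemma redC_a1_bound (E : tcurve) :
  condC E -> (a1 (redC E) <= a2 (redC E) + a4 (redC E) + 2)%N.
Proof. by case: E => e1 e2 e3 e4 e5 e6 [/= + _ _]; rewrite /pd; lia. Qed.

Lemma redD_a1_bound (E : tcurve) :
  condD E -> (a1 (redD E) <= a3 (redD E) + a5 (redD E) + 2)%N.
Proof. by case: E => e1 e2 e3 e4 e5 e6 [/= + _ _]; rewrite /pd; lia. Qed.

Lemma red_step_bound (E C : tcurve) : red_step E C ->
  (a1 C <= maxn (a3 C + a5 C + 2) (a2 C + a4 C + 2))%N \/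
  (a6 C <= maxn (a4 C + a5 C + 2) (a2 C + a3 C + 2))%N.
Proof.
case=> [[/redA_a6_bound + ->]|[/redB_a6_bound + ->]
       |[/redC_a1_bound + ->]|[/redD_a1_bound + ->]] => le;
  by [right; rewrite leq_max le orbT | right; rewrite leq_max le
     | left; rewrite leq_max le orbT | left; rewrite leq_max le].
Qed.

Lemma clos_rt_no_pred {T : Type} {r : T -> T -> Prop} {x y : T} :
  (forall z, ~ r z y) -> clos_refl_trans T r x y -> x = y.
Proof.
move=> no_pred xy.
case: (clos_rt_rtn1 T r x y xy) no_pred => [//|z w zw _ no_pred].
by case: (no_pred z zw).
Qed.

Theorem proposition6p2 (k : fieldType) (C : tcurve) :
  minimal k C ->
  (a1 C > maxn (a3 C + a5 C + 2) (a2 C + a4 C + 2))%N ->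
  (a6 C > maxn (a4 C + a5 C + 2) (a2 C + a3 C + 2))%N ->
  ~ exists D : tcurve, ~ minimal k D /\ reduces_to D C.
Proof.
move=> minC a1_big a6_big [D [nminD DC]].
have no_pred E : ~ red_step E C.
  by case/red_step_bound=> le; [move: a1_big | move: a6_big]; rewrite ltnNge le.
by apply: nminD; rewrite (clos_rt_no_pred no_pred DC).
Qed.
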